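(* Let $N\ge 2$ and let $\hat{\mu}^A=(\hat\mu^A_1,\dots,\hat\mu^A_N)$ and $\hat{\mu}^B=(\hat\mu^B_1,\dots,\hat\mu^B_N)$ be real-valued random vectors (with finite expectations). For $1\le K\le N$ let $\mathcal{M}_K$ be the set of indices corresponding to the $K$ largest values of $\hat{\mu}^B$, and let $a_K^*\in\mathcal{M}_K$ be an index with $\hat{\mu}^A_{a_K^*}=\max_{i\in\mathcal{M}_K}\hat{\mu}^A_i$ (ties broken uniformly at random). Then for every $1\le K<N$, $$\mathbb{E}\left[\hat{\mu}^B_{a_K^*}\right]\ \ge\ \mathbb{E}\left[\hat{\mu}^B_{a_{K+1}^*}\right],$$ i.e. as $K$ decreases the underestimation decays monotonically.
   Context: In the paper, $\hat\mu^A_i$ and $\hat\mu^B_i$ are sample-average estimators of $\mathbb{E}[X_i]$ for independent random variables $X_1,\dots,X_N$, computed from two disjoint random halves $S^A,S^B$ of a sample set $S=\bigcup_i S_i$, where $S_i$ consists of i.i.d. samples of $X_i$: $\hat\mu_i^A=\frac{1}{|S_i^A|}\sum_{s\in S_i^A}s$, $\hat\mu_i^B=\frac{1}{|S_i^B|}\sum_{s\in S_i^B}s$. *)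

From HB Require Import structures.
From mathcomp Require Import all_boot all_order all_algebra.
From mathcomp Require Import all_classical all_reals all_analysis.
Set Implicit Arguments. Unset Strict Implicit. Unset Printing Implicit Defensive.
Import Order.TTheory GRing.Theory Num.Theory.
Local Open Scope ring_scope.

Section Defs.
Variables (R : realType) (N : nat).

Definition ranked_before (b : 'I_N -> R) (j i : 'I_N) : bool :=
  (b i < b j) || ((b j == b i) && (j < i)%N).

Definition topK (b : 'I_N -> R) (K : nat) : {set 'I_N} :=
  [set i | (#|[set j | ranked_before b j i]| < K)%N].

Definition argmaxIn (a : 'I_N -> R) (M : {set 'I_N}) : {set 'I_N} :=
  [set i in M | [forall j in M, a j <= a i]].

(* Value of b at a*_K, averaged over the uniformly random tie-breaking
   among the maximizers of a over M_K (= conditional expectation of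
   b_{a*_K} given the realized vectors a and b). *)
Definition sel_value (a b : 'I_N -> R) (K : nat) : R :=
  (\sum_(i in argmaxIn a (topK b K)) b i) / (#|argmaxIn a (topK b K)|)%:R.

End Defs.

(** Fix the sample and write a = muA, b = muB.  Passing from M_K to M_(K+1)
  adds one index x whose b-value lies below every b-value on M_K.  If x
  does not strictly beat the a-maximum over M_K, the set of a-maximizers is
  unchanged or gains x; if it does, x becomes the only maximizer.  Either
  way the average of b over the maximizers cannot increase, so the
  inequality holds pointwise, before taking expectations. *)
From HB Require Import structures.
From mathcomp Require Import all_boot all_order all_algebra.
From mathcomp Require Import all_classical all_reals all_analysis.
Set Implicit Arguments. Unset Strict Implicit. Unset Printing Implicit Defensive.
Import Order.TTheory GRing.Theory Num.Theory.
Local Open Scope ring_scope.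

Section Mean.
Variables (R : numFieldType) (T : finType).
Implicit Types (A B : {set T}) (f : T -> R) (c : R).

Definition mean A f := (\sum_(i in A) f i) / #|A|%:R.

Lemma mean_le A f c : (0 < #|A|)%N -> {in A, forall x, f x <= c} -> mean A f <= c.
Proof.
move=> A0 fc; have cA : 0 < #|A|%:R :> R by rewrite ltr0n.
by rewrite ler_pdivrMr // mulr_natr -sumr_const; apply: ler_sum.
Qed.

Lemma mean_ge A f c : (0 < #|A|)%N -> {in A, forall x, c <= f x} -> c <= mean A f.
Proof.
move=> A0 fc; have cA : 0 < #|A|%:R :> R by rewrite ltr0n.
by rewrite ler_pdivlMr // mulr_natr -sumr_const; apply: ler_sum.
Qed.

Lemma sum_sub_mean A f : (0 < #|A|)%N -> \sum_(i in A) (f i - mean A f) = 0.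
Proof.
move=> A0; have cA : #|A|%:R != 0 :> R by rewrite pnatr_eq0 -lt0n.
by rewrite sumrB sumr_const /mean -[_ *+ _]mulr_natr divfK ?subrr.
Qed.

Lemma mean_setU_le A B f : (0 < #|A|)%N -> {in B :\: A, forall x, f x <= mean A f} ->
  mean (A :|: B) f <= mean A f.
Proof.
move=> A0 fB; have cAB : 0 < #|A :|: B|%:R :> R.
  by rewrite ltr0n (leq_trans A0) // subset_leq_card // finset.subsetUl.
rewrite [leLHS]/mean ler_pdivrMr // -subr_le0 mulr_natr -sumr_const -sumrB.
rewrite (bigID (mem A)) /= -[leRHS]addr0; apply: lerD.
  rewrite (eq_bigl (mem A)) ?sum_sub_mean // => x.
  by rewrite /= !inE andb_idl // => ->.
apply: sumr_le0 => x; rewrite !inE => /andP[/orP[-> //|xB] xA].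
by rewrite subr_le0 fB // inE xA.
Qed.

End Mean.

Section TopKArgmax.
Variables (R : realType) (N : nat).
Implicit Types (a b : 'I_N -> R) (M : {set 'I_N}).

Lemma ranked_before_irr b i : ~~ ranked_before b i i.
Proof. by rewrite /ranked_before ltxx eqxx ltnn. Qed.

Lemma ranked_before_trans b i j k :
  ranked_before b i j -> ranked_before b j k -> ranked_before b i k.
Proof.
rewrite /ranked_before => /orP[h1|/andP[/eqP e1 h1]] /orP[h2|/andP[/eqP e2 h2]].
- by rewrite (lt_trans h2 h1).
- by rewrite -e2 h1.
- by rewrite e1 h2.
- by rewrite e1 -e2 eqxx (ltn_trans h1 h2) orbT.
Qed.

Definition rank b i := #|[set j | ranked_before b j i]|.

Lemma mem_topK b K i : (i \in topK b K) = (rank b i < K)%N.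
Proof. by rewrite inE. Qed.

Lemma rank_lt b i j : ranked_before b i j -> (rank b i < rank b j)%N.
Proof.
move=> hij; apply: proper_card; apply/properP; split.
  by apply/fintype.subsetP => k; rewrite !inE => /ranked_before_trans; apply.
by exists i; rewrite !inE ?hij // ranked_before_irr.
Qed.

Lemma card_topK_gt0 b K : (0 < K)%N -> (0 < N)%N -> (0 < #|topK b K|)%N.
Proof.
move=> K0 N0; apply/card_gt0P.
have [i _ i_min] := @arg_minP _ nat _ (Ordinal N0) predT (rank b) isT.
exists i; rewrite mem_topK (leq_trans _ K0) // ltnS leqn0 cards_eq0.
apply/eqP/setP => j; rewrite !inE; apply/negbTE/negP => /rank_lt.
by rewrite ltnNge -leEnat i_min.
Qed.

Lemma subset_topKS b K : topK b K \subset topK b K.+1.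
Proof. by apply/fintype.subsetP => i; rewrite !mem_topK => /ltnW. Qed.

Lemma le_notin_topK b K i k : i \notin topK b K -> k \in topK b K -> b i <= b k.
Proof.
rewrite !mem_topK -leqNgt => Ki kK; rewrite leNgt; apply/negP => bik.
have /rank_lt ik : ranked_before b i k by rewrite /ranked_before bik.
by move: (leq_trans Ki (ltnW ik)); rewrite leqNgt kK.
Qed.

Lemma argmaxIn_subset a M : argmaxIn a M \subset M.
Proof. by apply/fintype.subsetP => i; rewrite inE => /andP[]. Qed.

Lemma card_argmaxIn_gt0 a M : (0 < #|M|)%N -> (0 < #|argmaxIn a M|)%N.
Proof.
case/card_gt0P => i0 Mi0; apply/card_gt0P.
have [i Mi i_max] := @arg_maxP _ R _ i0 (mem M) a Mi0.
by exists i; rewrite inE; apply/andP; split => //; apply/forall_inP.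
Qed.

Lemma argmaxIn_restrict a M M' i : M \subset M' ->
  i \in argmaxIn a M' -> i \in M -> i \in argmaxIn a M.
Proof.
move=> MM' /[!inE] /andP[_ /forall_inP i_max] Mi; rewrite Mi /=.
by apply/forall_inP => j /(fintype.subsetP MM'); apply: i_max.
Qed.

Lemma argmaxIn_subset_of_meet a M M' i : M \subset M' ->
  i \in argmaxIn a M' -> i \in argmaxIn a M -> argmaxIn a M \subset argmaxIn a M'.
Proof.
move=> MM' /[!inE] /andP[_ /forall_inP i_max'] /andP[Mi /forall_inP i_max].
apply/fintype.subsetP => j /[!inE] /andP[Mj /forall_inP j_max].
have -> : a j = a i by apply/eqP; rewrite eq_le i_max ?j_max.
by rewrite (fintype.subsetP MM') //=; apply/forall_inP.
Qed.

Lemma sel_value_topKS a b K : (0 < K)%N -> (0 < N)%N ->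
  sel_value a b K.+1 <= sel_value a b K.
Proof.
move=> K0 N0; have MM' := subset_topKS b K.
set M := topK b K in MM' *; set M' := topK b K.+1 in MM' *.
set A := argmaxIn a M; set A' := argmaxIn a M'.
change (mean A' b <= mean A b).
have A0 : (0 < #|A|)%N by rewrite card_argmaxIn_gt0 ?card_topK_gt0.
have A'0 : (0 < #|A'|)%N by rewrite card_argmaxIn_gt0 ?card_topK_gt0.
have new_below : {in A' :\: A, forall x, b x <= mean A b}.
  move=> x /setDP[xA' xNA]; apply: mean_ge => // y yA.
  apply: le_notin_topK; last exact: (fintype.subsetP (argmaxIn_subset a M)).
  by move: xNA; apply: contraNN; apply: (argmaxIn_restrict MM' xA').
have [i /andP[iA' iA]|A'A] := pickP [pred i | (i \in A') && (i \in A)].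
  have AA' : A \subset A' := argmaxIn_subset_of_meet MM' iA' iA.
  by rewrite -(finset.setUidPr AA'); apply: mean_setU_le.
apply: mean_le => // x xA'; apply: new_below; rewrite inE xA' andbT.
by apply/negP => xA; have := A'A x; rewrite /= xA' xA.
Qed.

End TopKArgmax.

Local Open Scope ereal_scope.

(* No measurability is needed: [\int] is defined by suprema over simple
   functions below the positive and negative parts, both monotone in [f]. *)
Lemma le_integral_pointwise (R : realType) (d : measure_display)
    (T : measurableType d) (mu : {measure set T -> \bar R}) (f g : T -> \bar R) :
  (forall x, f x <= g x) -> \int[mu]_x f x <= \int[mu]_x g x.
Proof.
move=> fg; rewrite /integral; apply: leeB.
- apply: ereal_sup_le => _ /= [h hf <-]; exists h => //= x.
  apply: (le_trans (hf x)); rewrite !patch_setT !funeposE /=.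
  by rewrite ge_max !le_max fg lexx !orbT.
- apply: ereal_sup_le => _ /= [h hg <-]; exists h => //= x.
  apply: (le_trans (hg x)); rewrite !patch_setT !funenegE /=.
  by rewrite ge_max !le_max leeN2 fg lexx !orbT.
Qed.

Theorem mainTheorem1 (R : realType) (d : measure_display) (T : measurableType d)
  (P : probability T R) (N : nat) (muA muB : 'I_N -> {RV P >-> R}) :
  (2 <= N)%N ->
  (forall i, P.-integrable setT (EFin \o muA i)) ->
  (forall i, P.-integrable setT (EFin \o muB i)) ->
  forall K : nat, (1 <= K)%N -> (K < N)%N ->
  \int[P]_w (sel_value (fun i => muA i w) (fun i => muB i w) K.+1)%:E
    <= \int[P]_w (sel_value (fun i => muA i w) (fun i => muB i w) K)%:E.
Proof.
move=> N2 _ _ K K1 _; apply: le_integral_pointwise => w.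
by rewrite lee_fin sel_value_topKS // (leq_trans _ N2).
Qed.
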